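(* Let $n\ge 1$ and let $f(x)=x^n+\sum_{i=1}^{n}c_i x^{n-i}$ be an irreducible polynomial over $\mathrm{GF}(2)$ with $f(x)\neq x$. Let $B$ be the binary matrix with $2^n-1$ rows and columns indexed by $j=0,1,2,\ldots$, whose rows are indexed by the nonzero initial states $s=(a_{-n},\ldots,a_{-1})\in\mathrm{GF}(2)^n\setminus\{0\}$, the row indexed by $s$ being the sequence $a_0,a_1,a_2,\ldots$ determined by $a_k=\sum_{i=1}^{n}c_i a_{k-i}$ (mod $2$) from the initial state $s$. Let $R$ be a set of $n$ distinct nonnegative integers and define the set polynomial $$g_R(x)=\prod_{\emptyset\neq Q\subseteq R}\ \sum_{r\in Q}x^{r}\in\mathrm{GF}(2)[x].$$ Then the submatrix of $B$ formed by the $n$ columns indexed by $R$ contains every nonzero binary $n$-tuple as a row if and only if $f(x)$ does not divide $g_R(x)$.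
   Context: Equivalently, the rows of $B$ are all cyclic shifts of all nonzero sequences satisfying the linear recurrence associated with $f(x)$. *)

From HB Require Import structures.
From mathcomp Require Import all_boot all_order all_algebra.
Set Implicit Arguments. Unset Strict Implicit. Unset Printing Implicit Defensive.
Import GRing.Theory.
Local Open Scope ring_scope.

(* Feedback coefficients: c i stands for c_{i+1}, i = 0..n-1. *)

Definition charpoly_lfsr (n : nat) (c : 'I_n -> 'F_2) : {poly 'F_2} :=
  'X^n + \sum_(i < n) (c i)%:P * 'X^(n - i.+1).

(* A state is a function st : nat -> 'F_2 where, at time k,
   st m = a_{k-n+m} for m < n (window (a_{k-n},...,a_{k-1})). *)
Definition lfsr_next (n : nat) (c : 'I_n -> 'F_2) (st : nat -> 'F_2) : 'F_2 :=
  \sum_(i < n) c i * st (n - i.+1)%N.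

Fixpoint lfsr_state (n : nat) (c : 'I_n -> 'F_2) (s : nat -> 'F_2) (k : nat)
  : nat -> 'F_2 :=
  match k with
  | 0 => s
  | k'.+1 => let st := lfsr_state c s k' in
             fun m => if (m.+1 < n)%N then st m.+1 else lfsr_next c st
  end.

(* Initial state s = (a_{-n},...,a_{-1}) given as a row vector: s_j = a_{j-n}. *)
Definition init_state (n : nat) (s : 'rV['F_2]_n) : nat -> 'F_2 :=
  fun m => match (insub m : option 'I_n) with
           | Some j => s ord0 j
           | None => 0
           end.

(* The output sequence a_0, a_1, ... : entry of row s of B in column k. *)
Definition lfsr_seq (n : nat) (c : 'I_n -> 'F_2) (s : 'rV['F_2]_n) (k : nat)
  : 'F_2 :=
  lfsr_next c (lfsr_state c (init_state s) k).

(* Set polynomial g_R(x) = prod_{Q nonempty subset of R} sum_{r in Q} x^r,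
   for R = {r_0,...,r_{n-1}} given by an injective r. *)
Definition set_poly (n : nat) (r : 'I_n -> nat) : {poly 'F_2} :=
  \prod_(Q : {set 'I_n} | Q != set0) \sum_(i in Q) 'X^(r i).

From HB Require Import structures.
From mathcomp Require Import all_boot all_order all_algebra.
From mathcomp Require Import zify ring.
Import GRing.Theory.
Local Open Scope ring_scope.

(* A sequence b satisfying the recurrence of f defines the linear functional
   p |-> sum_j p_j b_j on GF(2)[x], which vanishes on the multiples of f.
   If f divides a factor sum_{r in Q} x^r of g_R, then every row of B sums to
   0 over the columns Q, so the unit vector supported at one r in Q is never
   a row.  Otherwise the residues of the x^r (r in R) are linearly independent,
   hence a basis of GF(2)[x]/(f); a recurrent sequence vanishing on R then
   annihilates every polynomial, and since x is invertible modulo f this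
   forces the whole sequence, initial state included, to vanish.  So the map
   from initial states to the n columns R is injective, hence bijective. *)

Section Pairing.

Context {R : nzRingType}.
Implicit Types (b : nat -> R) (p q : {poly R}).

Definition pairing b p := \sum_(j < size p) p`_j * b j.

Lemma pairing_widen b {p} {N} :
  (size p <= N)%N -> pairing b p = \sum_(j < N) p`_j * b j.
Proof.
move=> le_pN; rewrite /pairing (big_ord_widen N (fun j => p`_j * b j) le_pN).
rewrite big_mkcond; apply: eq_bigr => j _; case: ltnP => // le_pj.
by rewrite nth_default // mul0r.
Qed.

Lemma pairing0 b : pairing b 0 = 0.
Proof. by rewrite /pairing size_poly0 big_ord0. Qed.

Lemma pairingD b : {morph pairing b : p q / p + q}.
Proof.
move=> p q; rewrite (pairing_widen b (size_polyD p q)).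
rewrite (pairing_widen b (leq_maxl (size p) (size q))).
rewrite (pairing_widen b (leq_maxr (size p) (size q))) -big_split.
by apply: eq_bigr => j _; rewrite coefD mulrDl.
Qed.

Lemma pairingZ b a p : pairing b (a *: p) = a * pairing b p.
Proof.
rewrite (pairing_widen b (size_scale_leq a p)) mulr_sumr.
by apply: eq_bigr => j _; rewrite coefZ mulrA.
Qed.

Lemma pairing_sum b (I : finType) (P : pred I) (F : I -> {poly R}) :
  pairing b (\sum_(i | P i) F i) = \sum_(i | P i) pairing b (F i).
Proof. exact: (big_morph _ (pairingD b) (pairing0 b)). Qed.

Lemma pairingXn b m : pairing b 'X^m = b m.
Proof.
rewrite /pairing size_polyXn big_ord_recr /= coefXn eqxx mul1r big1 ?add0r //.
by move=> j _; rewrite coefXn ltn_eqF // mul0r.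
Qed.

Lemma pairingXnM b k p : pairing b ('X^k * p) = pairing (fun m => b (k + m)%N) p.
Proof.
have le_Xkp : (size ('X^k * p)%R <= k + size p)%N.
  by rewrite (leq_trans (size_polyMleq _ _)) // size_polyXn addSn.
rewrite (pairing_widen b le_Xkp) big_split_ord /= big1 ?add0r => [|j _].
  by apply: eq_bigr => j _; rewrite coefXnM ltnNge leq_addr /= addKn.
by rewrite coefXnM ltn_ord mul0r.
Qed.

End Pairing.

Section Independence.

Context {F : finFieldType} {n : nat} {f : {poly F}} {q : 'I_n -> {poly F}}.
Hypothesis size_f : size f = n.+1.
Hypothesis q_indep : forall l : 'rV[F]_n, l != 0 -> ~~ (f %| \sum_j l 0 j *: q j).

(* l |-> (sum_j l_j q_j mod f) is injective on the finite 'rV_n, hence onto. *)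
Lemma exists_modp_lincomb p :
  exists l : 'rV[F]_n, p %% f = (\sum_j l 0 j *: q j) %% f.
Proof.
have f_neq0 : f != 0 by rewrite -size_poly_eq0 size_f.
have size_mod (g : {poly F}) : (size (g %% f)%R <= n)%N.
  by rewrite -ltnS -size_f ltn_modp.
pose res (l : 'rV[F]_n) := poly_rV ((\sum_j l 0 j *: q j) %% f) : 'rV[F]_n.
have res_inj : injective res.
  move=> l1 l2 /(congr1 rVpoly); rewrite !poly_rV_K ?size_mod // => /eqP.
  rewrite -subr_eq0 -modpN -modpD -sumrB => /eqP/modp_eq0P.
  apply: contraTeq; rewrite -subr_eq0 => /q_indep.
  by under eq_bigr do rewrite !mxE scalerBl.
have [res' _ resK] := injF_bij res_inj.
exists (res' (poly_rV (p %% f))).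
move/(congr1 rVpoly): (resK (poly_rV (p %% f))).
by rewrite !poly_rV_K ?size_mod.
Qed.

End Independence.

Lemma F2_neq0 (x : 'F_2) : x != 0 -> x = 1.
Proof. by case: x => -[|[|//]] ? //= _; apply: val_inj. Qed.

Lemma F2_lincomb_ndvdp {n} {f : {poly 'F_2}} {q : 'I_n -> {poly 'F_2}} :
  (forall Q : {set 'I_n}, Q != set0 -> ~~ (f %| \sum_(j in Q) q j)) ->
  forall l : 'rV['F_2]_n, l != 0 -> ~~ (f %| \sum_j l 0 j *: q j).
Proof.
move=> indep l l_neq0; pose Q := [set j | l 0 j != 0].
have -> : \sum_j l 0 j *: q j = \sum_(j in Q) q j.
  rewrite (bigID (mem Q)) /= [X in _ + X]big1 ?addr0 => [|j].
    by apply: eq_bigr => j; rewrite inE => /F2_neq0 ->; rewrite scale1r.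
  by rewrite inE negbK => /eqP ->; rewrite scale0r.
apply: indep; apply: contraNneq l_neq0 => Q0; apply/eqP/rowP => j.
rewrite mxE; apply/eqP; apply: contraT => lj_neq0.
by have := in_set0 j; rewrite -Q0 inE lj_neq0.
Qed.

Lemma irredp_dvdp_prod {F : fieldType} {I : finType} {P : pred I}
    {G : I -> {poly F}} {f : {poly F}} :
  irreducible_poly f -> f %| \prod_(i | P i) G i -> exists2 i, P i & f %| G i.
Proof.
move=> irr_f f_dvd.
have [i /andP[Pi f_dvd_i] | none] := pickP (fun i => P i && (f %| G i)).
  by exists i.
have : coprimep f (\prod_(i | P i) G i).
  apply: (big_ind (coprimep f)) => [|g h|i Pi]; first exact: coprimep1.
    by rewrite coprimepMr => -> ->.
  by rewrite irreducible_poly_coprime //; move: (none i); rewrite Pi /= => ->.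
rewrite coprimep_sym => /(coprimep_dvdr f_dvd); rewrite coprimepp.
by case: irr_f => /gtn_eqF ->.
Qed.

Lemma coprimep_X_irredp {F : fieldType} {f : {poly F}} :
  irreducible_poly f -> ~~ (f %= 'X) -> coprimep 'X f.
Proof.
move=> irr_f; rewrite coprimep_sym coprimepX; apply: contra.
rewrite -dvdp_XsubCl subr0 eqp_sym; apply: irr_f.
by rewrite size_polyX.
Qed.

Section Recurrence.

Context {n : nat} {c : 'I_n -> 'F_2}.
Local Notation f := (charpoly_lfsr c).
Implicit Types (b : nat -> 'F_2) (p : {poly 'F_2}).

Definition recurrent b :=
  forall k, b (k + n)%N = \sum_(i < n) c i * b (k + (n - i.+1))%N.

Lemma recurrent_shift k {b} : recurrent b -> recurrent (fun m => b (k + m)%N).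
Proof.
by move=> rec_b j; rewrite addnA rec_b; apply: eq_bigr => i _; rewrite addnA.
Qed.

Lemma recurrentB {b1 b2} :
  recurrent b1 -> recurrent b2 -> recurrent (fun m => b1 m - b2 m).
Proof.
move=> rec1 rec2 k; rewrite rec1 rec2 -sumrB.
by apply: eq_bigr => i _; rewrite mulrBr.
Qed.

Lemma size_charpoly_lfsr_tail :
  (size (\sum_(i < n) (c i)%:P * 'X^(n - i.+1))%R <= n)%N.
Proof.
apply: (big_ind (fun g : {poly 'F_2} => size g <= n)%N) => [|g h|i _].
- by rewrite size_poly0.
- by move=> le_g le_h; rewrite (leq_trans (size_polyD g h)) // geq_max le_g.
rewrite mul_polyC (leq_trans (size_scale_leq _ _)) // size_polyXn.
by have := ltn_ord i; lia.
Qed.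

Lemma size_charpoly_lfsr : size f = n.+1.
Proof. by rewrite size_polyDl size_polyXn // ltnS size_charpoly_lfsr_tail. Qed.

Lemma charpoly_lfsr_monic : f \is monic.
Proof.
rewrite monicE lead_coefDl ?lead_coefXn //.
by rewrite size_polyXn ltnS size_charpoly_lfsr_tail.
Qed.

(* <b, f> = b_n + sum_i c_i b_{n-1-i} = 2 b_n, which vanishes over GF(2). *)
Lemma pairing_charpoly b : recurrent b -> pairing b f = 0.
Proof.
move=> rec_b; have rec_b0 : b n = \sum_(i < n) c i * b (n - i.+1)%N := rec_b 0%N.
rewrite pairingD pairingXn pairing_sum.
under eq_bigr do rewrite mul_polyC pairingZ pairingXn.
by rewrite -rec_b0 addrr_pchar2 // pchar_Fp.
Qed.

Lemma pairing_mul_charpoly q b : recurrent b -> pairing b (q * f) = 0.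
Proof.
elim/poly_ind: q b => [|q a IHq] b rec_b; first by rewrite mul0r pairing0.
rewrite mulrDl mul_polyC pairingD pairingZ pairing_charpoly // mulr0 addr0.
rewrite [q * 'X]mulrC -mulrA -['X]expr1 pairingXnM.
by apply: IHq; apply: recurrent_shift.
Qed.

Lemma pairing_dvdp {b p} : recurrent b -> f %| p -> pairing b p = 0.
Proof. by move=> rec_b /dvdpP[q ->]; apply: pairing_mul_charpoly. Qed.

Lemma pairing_modp {b p} : recurrent b -> pairing b p = pairing b (p %% f).
Proof.
by move=> rec_b; rewrite {1}(divp_eq p f) pairingD pairing_mul_charpoly ?add0r.
Qed.

(* Bezout: x^m = u x^n + v f, so b_m = <shifted b, u> + <b, v f>. *)
Lemma recurrent_eq0_shift {b} :
  coprimep 'X f -> recurrent b -> (forall m, b (n + m)%N = 0) -> forall m, b m = 0.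
Proof.
move=> coXf rec_b b_shift0 m.
have /Bezout_eq1_coprimepP[[u v] /= uv1] := coprimep_expl n coXf.
have -> : b m = pairing b ('X^n * ('X^m * u) + 'X^m * v * f).
  have -> : 'X^n * ('X^m * u) + 'X^m * v * f = 'X^m * (u * 'X^n + v * f) by ring.
  by rewrite uv1 mulr1 pairingXn.
rewrite pairingD pairingXnM pairing_mul_charpoly // addr0.
by rewrite /pairing big1 // => j _; rewrite b_shift0 mulr0.
Qed.

Context {r : 'I_n -> nat}.
Hypothesis columns_indep :
  forall Q : {set 'I_n}, Q != set0 -> ~~ (f %| \sum_(j in Q) 'X^(r j)).

Lemma recurrent_eq0_columns {b} :
  recurrent b -> (forall j, b (r j) = 0) -> forall m, b m = 0.
Proof.
move=> rec_b b_r0 m.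
have [l lE] := exists_modp_lincomb size_charpoly_lfsr
  (F2_lincomb_ndvdp columns_indep) 'X^m.
rewrite -pairingXn (pairing_modp rec_b) lE -(pairing_modp rec_b) pairing_sum.
by rewrite big1 // => j _; rewrite pairingZ pairingXn b_r0 mulr0.
Qed.

End Recurrence.

Arguments recurrent {n} c b.

Section LFSR.

Context {n : nat} {c : 'I_n -> 'F_2}.
Local Notation f := (charpoly_lfsr c).
Implicit Types (s : 'rV['F_2]_n) (r : 'I_n -> nat).

(* [lfsr_stream s m] is a_{m-n}: the initial state followed by the output. *)
Definition lfsr_stream s m :=
  if (m < n)%N then init_state s m else lfsr_seq c s (m - n).

Definition lfsr_covers r := forall v : 'rV['F_2]_n, v != 0 ->
  exists s, s != 0 /\ forall j : 'I_n, lfsr_seq c s (r j) = v 0 j.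

Lemma lfsr_stream_addn s k : lfsr_stream s (n + k) = lfsr_seq c s k.
Proof. by rewrite /lfsr_stream ltnNge leq_addr /= addKn. Qed.

Lemma lfsr_stream_ord s (j : 'I_n) : lfsr_stream s j = s 0 j.
Proof. by rewrite /lfsr_stream ltn_ord /init_state valK. Qed.

Lemma lfsr_stateE s k m :
  (m < n)%N -> lfsr_state c (init_state s) k m = lfsr_stream s (k + m).
Proof.
elim: k m => [|k IHk] m lt_mn /=; first by rewrite /lfsr_stream lt_mn.
case: ifP => [lt_m1n | /negbT]; first by rewrite IHk // addSnnS.
rewrite -leqNgt => le_nm1; have -> : (k.+1 + m = n + k)%N by lia.
by rewrite lfsr_stream_addn.
Qed.

Lemma lfsr_stream_recurrent s : recurrent c (lfsr_stream s).
Proof.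
move=> k; rewrite addnC lfsr_stream_addn /lfsr_seq /lfsr_next.
by apply: eq_bigr => i _; rewrite lfsr_stateE //; have := ltn_ord i; lia.
Qed.

Lemma lfsr_state0 k m : lfsr_state c (init_state (0 : 'rV_n)) k m = 0.
Proof.
elim: k m => [|k IHk] m /=.
  by rewrite /init_state; case: insubP => // j _ _; rewrite mxE.
case: ifP => _; first exact: IHk.
by rewrite /lfsr_next big1 // => i _; rewrite IHk mulr0.
Qed.

Lemma lfsr_seq0 k : lfsr_seq c 0 k = 0.
Proof.
by rewrite /lfsr_seq /lfsr_next big1 // => i _; rewrite lfsr_state0 mulr0.
Qed.

Lemma lfsr_columns_sum_eq0 r (Q : {set 'I_n}) s :
  f %| \sum_(j in Q) 'X^(r j) -> \sum_(j in Q) lfsr_seq c s (r j) = 0.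
Proof.
move/(pairing_dvdp (recurrent_shift n (lfsr_stream_recurrent s))).
by rewrite pairing_sum; under eq_bigr do rewrite pairingXn lfsr_stream_addn.
Qed.

(* A row realizing the unit vector at j0 \in Q sums to 1 over the columns Q. *)
Lemma lfsr_covers_ndvdp r (Q : {set 'I_n}) :
  lfsr_covers r -> Q != set0 -> ~~ (f %| \sum_(j in Q) 'X^(r j)).
Proof.
move=> covers /set0Pn[j0 j0Q].
have delta_neq0 : delta_mx 0 j0 != 0 :> 'rV['F_2]_n.
  by apply/eqP => /rowP/(_ j0)/eqP; rewrite !mxE !eqxx oner_eq0.
have [s [_ s_j0]] := covers _ delta_neq0.
apply/negP => /(lfsr_columns_sum_eq0 r Q s).
rewrite (bigD1 j0) //= big1 => [|j /andP[_ neq_j]].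
  by rewrite s_j0 mxE !eqxx addr0 => /eqP; rewrite oner_eq0.
by rewrite s_j0 mxE (negPf neq_j).
Qed.

Lemma lfsr_columns_inj r :
  coprimep 'X f ->
  (forall Q : {set 'I_n}, Q != set0 -> ~~ (f %| \sum_(j in Q) 'X^(r j))) ->
  injective (fun s => \row_j lfsr_seq c s (r j)).
Proof.
move=> coXf indep s1 s2 /rowP s12.
pose b m := lfsr_stream s1 m - lfsr_stream s2 m.
have rec_b : recurrent c b :=
  recurrentB (lfsr_stream_recurrent s1) (lfsr_stream_recurrent s2).
have b0 : forall m, b m = 0.
  apply: (recurrent_eq0_shift coXf rec_b).
  apply: (recurrent_eq0_columns indep (recurrent_shift n rec_b)) => j.
  by move: (s12 j); rewrite /b !mxE !lfsr_stream_addn => ->; rewrite subrr.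
by apply/rowP => j; apply/eqP; rewrite -subr_eq0 -!lfsr_stream_ord; apply/eqP/b0.
Qed.

Lemma lfsr_covers_inj r :
  injective (fun s => \row_j lfsr_seq c s (r j)) -> lfsr_covers r.
Proof.
move=> /injF_bij[g _ gK] v v_neq0; exists (g v); split=> [|j].
  apply: contra v_neq0 => /eqP g0; rewrite -[v]gK g0.
  by apply/eqP/rowP => j; rewrite !mxE lfsr_seq0.
by rewrite -[in RHS](gK v) mxE.
Qed.

End LFSR.

Arguments lfsr_stream {n} c s m.
Arguments lfsr_covers {n} c r.

Lemma dvdp_set_poly n (r : 'I_n -> nat) (Q : {set 'I_n}) :
  Q != set0 -> \sum_(j in Q) 'X^(r j) %| set_poly r.
Proof. by move=> Q0; rewrite /set_poly (bigD1 Q) //= dvdp_mulr. Qed.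

Theorem theorem6 (n : nat) (c : 'I_n -> 'F_2) (r : 'I_n -> nat) :
  (0 < n)%N ->
  irreducible_poly (charpoly_lfsr c) ->
  charpoly_lfsr c != 'X ->
  injective r ->
  (forall v : 'rV['F_2]_n, v != 0 ->
     exists s : 'rV['F_2]_n, s != 0 /\ forall j : 'I_n, lfsr_seq c s (r j) = v ord0 j)
  <-> ~~ (charpoly_lfsr c %| set_poly r).
Proof.
(* [0 < n] follows from irreducibility, and [r] need not be injective:
   a repeated exponent makes a two-term factor of g_R vanish over GF(2). *)
move=> _ irr_f f_neqX _.
have coXf : coprimep 'X (charpoly_lfsr c).
  apply: coprimep_X_irredp irr_f _.
  by rewrite eqp_monic ?charpoly_lfsr_monic ?monicX.
split=> [covers | f_ndvd].
  apply/negP => /(irredp_dvdp_prod irr_f)[Q Q0]; apply/negP.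
  exact: lfsr_covers_ndvdp covers Q0.
apply: lfsr_covers_inj; apply: lfsr_columns_inj coXf _ => Q Q0.
by apply: contra f_ndvd => /dvdp_trans; apply; apply: dvdp_set_poly.
Qed.
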